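(* For every integer $k\geq 1$, every graph with average degree at least $4k$ contains the complete graph $K_k$ as a minor, or contains a minor with $n$ vertices and minimum degree $\delta$, where $\delta\geq 0.6518n$, $2\delta-n\geq 0.4659k$, and $k\leq\delta<n\leq 4k$.
   Context: All graphs are finite and simple. A graph $H$ is a minor of $G$ if a graph isomorphic to $H$ can be obtained from a subgraph of $G$ by contracting edges. *)

From mathcomp Require Import all_boot.
Set Implicit Arguments. Unset Strict Implicit. Unset Printing Implicit Defensive.

Definition simple_graph (T : finType) (e : rel T) : Prop :=
  irreflexive e /\ symmetric e.

Definition deg (T : finType) (e : rel T) (v : T) : nat := #|[set w | e v w]|.

(* sum of degrees = 2|E|; average degree = degsum / #|T| *)
Definition degsum (T : finType) (e : rel T) : nat := \sum_(v : T) deg e v.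

(* minimum degree (for nonempty T; the seed #|T| is never attained
   in a nonempty simple graph) *)
Definition mindeg (T : finType) (e : rel T) : nat :=
  \big[minn/#|T|]_(v : T) deg e v.

Definition connected_in (T : finType) (e : rel T) (A : {set T}) : Prop :=
  forall x y, x \in A -> y \in A ->
    connect [rel a b | [&& e a b, a \in A & b \in A]] x y.

Definition minor (U : finType) (f : rel U) (T : finType) (e : rel T) : Prop :=
  exists phi : U -> {set T},
    [/\ forall u, phi u != set0,
        forall u, connected_in e (phi u),
        forall u v, u != v -> [disjoint phi u & phi v]
      & forall u v, f u v -> exists x y, [/\ x \in phi u, y \in phi v & e x y]].

Definition complete_rel (k : nat) : rel 'I_k := fun i j => i != j.

From mathcomp Require Import all_boot all_order zify.
From Stdlib Require Import NArith Classical.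
Set Implicit Arguments. Unset Strict Implicit. Unset Printing Implicit Defensive.

(* Encode a minor by its set P of branch sets and the set E of ordered pairs of adjacent
   branch sets, so that #|E| is its degree sum.  Fix a threshold f and take a minor with
   2 f(#|P|) <= #|E| that is minimal for #|P| + #|E|.  Deleting an edge, deleting a vertex
   or contracting an edge destroys this property, so on its h vertices the minor has at
   most 2 f(h) + 1 ordered edges, minimum degree above f(h) - f(h-1), and every edge lies
   in at least f(h) - f(h-1) triangles.  Hence the neighbourhood of a vertex of minimum
   degree is a minor on fewer than h vertices with minimum degree at least f(h) - f(h-1).

   With f(h) = 2kh this turns average degree 4k into a minor on at most 4k vertices of
   minimum degree 2k.  Running the argument inside that minor with f = [threshold k]
   yields the required dense minor; the numerical bounds are elementary estimates on
   [threshold] for k >= 40 and a finite computation below.  So for k >= 2 the second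
   alternative of the theorem always holds. *)

Definition threshold (k h : nat) : nat :=
  if h <= k then 'C(h, 2) + 1
  else 'C(k, 2) + 1 + k * (h - k) + (h - 2 * k) * (h - 2 * k) %/ 8.

Lemma double_bin2 n : 2 * 'C(n, 2) = n * n.-1.
Proof.
rewrite bin2 -divn2 mulnC divnK // dvdn2 oddM.
by case: n => //= n; rewrite andNb.
Qed.

Lemma threshold_gt0 k h : 0 < threshold k h.
Proof. by rewrite /threshold; case: ifP => _; rewrite addn1 // -addnA addnC -addnA addnS. Qed.

Lemma threshold_gt_complete k h : 0 < k -> h <= k.+1 -> h * h.-1 < 2 * threshold k h.
Proof.
move=> k0; rewrite /threshold; case: ifP => [_ _ | /negbT hk hh].
  by rewrite mulnDr double_bin2; lia.
have -> : h = k.+1 by lia.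
have -> : k.+1 - 2 * k = 0 by lia.
rewrite mul0n div0n addn0 !mulnDr double_bin2 subSn // subnn /=.
by case: k {k0 hh hk} => [|k] //=; nia.
Qed.

Lemma threshold_succ k h : threshold k h <= threshold k h.+1.
Proof.
rewrite /threshold; case: (leqP h.+1 k) => [h1 | h1].
  by rewrite (ltnW h1) leq_add2r leq_bin2l.
case: (leqP h k) => h2.
  have -> : h = k by lia.
  lia.
rewrite leq_add ?leq_div2r ?leq_mul ?leq_add2l //; lia.
Qed.

Lemma threshold_homo k : {homo threshold k : m n / m <= n}.
Proof. by apply: homo_leq => [//|? ? ?|]; [exact: leq_trans | exact: threshold_succ]. Qed.

Lemma threshold_le_mul k n : 2 <= k -> 2 * k < n -> n <= 4 * k -> threshold k n <= k * n.
Proof.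
move=> k2 n1 n2; rewrite /threshold ifN; last lia.
have := leq_divM ((n - 2 * k) * (n - 2 * k)) 8.
have := double_bin2 k.
have : (n - 2 * k) * (n - 2 * k) <= (2 * k) * (2 * k) by apply: leq_mul; lia.
have e : k * (n - k) + k * k = k * n by rewrite -mulnDr subnK //; lia.
have : 2 * k * (2 * k) = 4 * (k * k) by rewrite mulnACA.
have : k * k.-1 + k = k * k by case: k {k2 n1 n2 e} => // k; rewrite mulnS addnC.
have : 2 * k <= k * k by rewrite leq_mul2r; lia.
move: ((n - 2 * k) * (n - 2 * k)) (_ %/ 8) ('C(k, 2)) (k * (n - k)) (k * k) (k * n)
  (k * k.-1) (2 * k * (2 * k)) e.
lia.
Qed.

Lemma threshold_middle k h : k < h <= (2 * k).+2 -> threshold k h = 'C(k, 2) + 1 + k * (h - k).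
Proof.
move=> /andP [hk h2]; rewrite /threshold ifN -?ltnNge // divn_small ?addn0 //.
have : h - 2 * k <= 2 by lia.
by case: (h - 2 * k) => [|[|[|]]].
Qed.

Lemma threshold_step_middle k h : k.+1 < h <= (2 * k).+2 ->
  threshold k h - threshold k h.-1 = k.
Proof.
by move=> /andP [hk h2]; rewrite !threshold_middle; lia.
Qed.

Lemma double_threshold_gt k h : k < h ->
  2 * threshold k h = k * k.-1 + 2 + 2 * (k * (h - k)) + 2 * ((h - 2 * k) * (h - 2 * k) %/ 8).
Proof. by move=> hk; rewrite /threshold ifN -?ltnNge // !mulnDr double_bin2. Qed.

Lemma middle_regime_bound k h d : 40 <= k -> k < h <= (2 * k).+2 ->
  h * d <= (2 * threshold k h).+1 -> 2 * 5000 * d <= (3 * 5000 + 341) * k.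
Proof.
move=> k40 hh; rewrite threshold_middle // !mulnDr double_bin2; case/andP: hh => h1 h2 dh.
have eA : k * k.-1 + k = k * k by rewrite -mulnSr prednK //; lia.
have eB : k * (h - k) + k * k = k * h by rewrite -mulnDr subnK //; lia.
rewrite leqNgt; apply/negP => c.
have c2 : ((3 * 5000 + 341) * k + 1) * h <= 2 * 5000 * d * h by rewrite leq_mul2r; lia.
rewrite mulnDl -!mulnA [d * h]mulnC in c2.
have p1 : k * h <= 2 * (k * k) + 2 * k.
  by apply: leq_trans (leq_mul (leqnn k) h2) _; rewrite mulnS mulnS mulnCA addnA addnn -mul2n addnC.
have p2 : 40 * k <= k * k by rewrite leq_mul2r k40 orbT.
move: (k * h) (k * k) (h * d) (k * k.-1) (k * (h - k)) p1 p2 c2 eA eB dh => P K DH A B; lia.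
Qed.

Lemma upper_regime_bound k j d D Q : 40 <= k -> 3 <= j ->
  8 * Q <= j * j -> 8 * k + 2 * j <= 8 * D + 8 ->
  (2 * k + j) * d <= k * k.-1 + 3 + 2 * (k * (k + j)) + 2 * Q ->
  (5000 + 1518) * d <= 2 * 5000 * D /\ 2 * 5000 * d + 4659 * k <= 4 * 5000 * D.
Proof.
move=> k40 j3 hq hD dh; rewrite [_ * d]mulnC in dh.
have eK : k * k.-1 + k = k * k by rewrite -mulnSr prednK //; lia.
have eKJ : k * (k + j) = k * k + k * j by rewrite mulnDr.
have eH1 : k * (2 * k + j) = 2 * (k * k) + k * j by rewrite mulnDr mulnCA.
have eH2 : j * (2 * k + j) = 2 * (k * j) + j * j by rewrite mulnDr mulnCA (mulnC j k).
have p3 : 40 * k <= k * k by rewrite leq_mul2r k40 orbT.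
have p4 : 40 * j <= k * j by rewrite leq_mul2r k40 orbT.
have p5 : 3 * k <= k * j by rewrite mulnC leq_mul2l j3 orbT.
have p2 : 8 * (k * (2 * k + j)) + 2 * (j * (2 * k + j)) <= 8 * (D * (2 * k + j)) + 8 * (2 * k + j).
  by rewrite !mulnA -!mulnDl; apply: leq_mul.
rewrite eH1 eH2 in p2.
split; rewrite leqNgt; apply/negP => c.
  have c2 : (2 * 5000 * D + 1) * (2 * k + j) <= (5000 + 1518) * d * (2 * k + j).
    by rewrite leq_mul2r; lia.
  rewrite mulnDl -!mulnA in c2.
  move: (d * (2 * k + j)) (D * (2 * k + j)) (k * k) (k * j) (j * j) (k * k.-1) (k * (k + j))
     c2 p2 p3 p4 p5 eK eKJ dh hq => DH Dh K KJ J A B; lia.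
have c2 : (4 * 5000 * D + 1) * (2 * k + j) <= (2 * 5000 * d + 4659 * k) * (2 * k + j).
  by rewrite leq_mul2r; lia.
rewrite 2!mulnDl -!mulnA eH1 in c2.
move: (d * (2 * k + j)) (D * (2 * k + j)) (k * k) (k * j) (j * j) (k * k.-1) (k * (k + j))
   c2 p2 p3 p4 p5 eK eKJ dh hq => DH Dh K KJ J A B; lia.
Qed.

Definition target_bounds (k δ n : nat) : bool :=
  [&& k <= δ, 6518 * n <= 10000 * δ & 10000 * n + 4659 * k <= 10000 * (2 * δ)].

(* [lia] does not see through nat literals of 5000 or more. *)
Lemma target_boundsE k δ n : target_bounds k δ n =
  [&& k <= δ, (5000 + 1518) * n <= 2 * 5000 * δ & 2 * 5000 * n + 4659 * k <= 4 * 5000 * δ].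
Proof. by rewrite /target_bounds mulnCA mulnA. Qed.

Lemma threshold_target_bounds_upper k h d : 40 <= k -> (2 * k).+2 < h ->
  let D := threshold k h - threshold k h.-1 in
  D < d -> h * d <= (2 * threshold k h).+1 -> target_bounds k D d.
Proof.
move=> k40 hk D dD dh; rewrite target_boundsE.
set j := h - 2 * k; have hj : h = 2 * k + j by rewrite /j; lia.
have u1 := @double_threshold_gt k h ltac:(lia).
have u0 := @double_threshold_gt k h.-1 ltac:(lia).
rewrite (_ : h.-1 - 2 * k = j.-1) in u0; last by rewrite /j; lia.
have ek : k * (h - k) = k * (h.-1 - k) + k by rewrite -mulnSr; congr (_ * _); lia.
have d1 := leq_divM (j * j) 8; have d1' := ltn_ceil (j * j) (isT : 0 < 8).
have d0 := leq_divM (j.-1 * j.-1) 8; have d0' := ltn_ceil (j.-1 * j.-1) (isT : 0 < 8).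
have ejj : j.-1 * j.-1 + 2 * j = j * j + 1.
  have : 0 < j by rewrite /j; lia.
  by case: j {hj u0 u1 d0 d0' d1 d1'} => // j' _ /=; nia.
set Q1 := j * j %/ 8 in u1 d1 d1'; set Q0 := j.-1 * j.-1 %/ 8 in u0 d0 d0'.
have eD : D = k + Q1 - Q0.
  by rewrite /D; move: (k * (h - k)) (k * (h.-1 - k)) (k * k.-1) u1 u0 ek => X Y Z; lia.
have hD : 8 * k + 2 * j <= 8 * D + 8.
  by rewrite eD; move: (j * j) (j.-1 * j.-1) d1 d1' d0 d0' ejj => J J1; lia.
have dh' : (2 * k + j) * d <= k * k.-1 + 3 + 2 * (k * (k + j)) + 2 * Q1.
  rewrite -hj (_ : k + j = h - k); last lia.
  by move: (k * (h - k)) (k * k.-1) (h * d) u1 dh => X Z DH; lia.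
have j3 : 3 <= j by rewrite /j; lia.
have hQ : 8 * Q1 <= j * j by lia.
have [r1 r2] := upper_regime_bound k40 j3 hQ hD dh'.
rewrite r1 r2 !andbT eD.
by move: (j * j) (j.-1 * j.-1) d1 d1' d0 d0' ejj => J J1; lia.
Qed.

Lemma threshold_target_bounds_large k h d : 40 <= k -> k.+2 <= h ->
  let D := threshold k h - threshold k h.-1 in
  D < d -> h * d <= (2 * threshold k h).+1 -> target_bounds k D d.
Proof.
move=> k40 hk D dD dh.
have [h2 | h2] := leqP h (2 * k).+2; last exact: threshold_target_bounds_upper.
have eD : D = k by apply: threshold_step_middle; lia.
have hd := middle_regime_bound k40 (ltac:(lia) : k < h <= (2 * k).+2) dh.
by rewrite target_boundsE eD leqnn /=; apply/andP; split; lia.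
Qed.

Lemma Nof_nat_divn x m : 0 < m -> N.of_nat (x %/ m) = (N.of_nat x / N.of_nat m)%N.
Proof.
move=> m0; apply: N.div_unique (_ : (N.of_nat (x %% m) < N.of_nat m)%N) _.
  by have := ltn_pmod x m0; lia.
by have := divn_eq x m; lia.
Qed.

(* [threshold] in binary arithmetic, for checking the cases k < 40 by computation. *)
Definition thresholdN (k h : N) : N :=
  if (h <=? k)%N then (h * (h - 1) / 2 + 1)%N
  else (k * (k - 1) / 2 + 1 + k * (h - k) + (h - 2 * k) * (h - 2 * k) / 8)%N.

Lemma thresholdN_of_nat k h : N.of_nat (threshold k h) = thresholdN (N.of_nat k) (N.of_nat h).
Proof.
rewrite /threshold /thresholdN !bin2 -!divn2.
case: ifP => hk.
  rewrite ifT; last by apply/N.leb_le; lia.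
  by rewrite Nat2N.inj_add Nof_nat_divn // Nat2N.inj_mul; congr (_ * _ / _ + _)%N; lia.
rewrite ifF; last by apply/N.leb_gt; lia.
rewrite !Nat2N.inj_add !Nof_nat_divn // !Nat2N.inj_mul !Nat2N.inj_sub (Nat2N.inj_mul 2 k).
by congr (_ * _ / _ + _ + _ + _)%N; lia.
Qed.

Definition threshold_target_boundsb (k h d : N) : bool :=
  let u := thresholdN k h in let D := (u - thresholdN k (h - 1))%N in
  (2 * u <=? h * (h - 1))%N ==> (D + 1 <=? d)%N ==> (h * d <=? 2 * u + 1)%N ==>
  [&& (k <=? D)%N, (6518 * d <=? 10000 * D)%N & (10000 * d + 4659 * k <=? 20000 * D)%N].

Definition threshold_target_bounds_for (k : nat) : bool :=
  all (fun h => all (fun d => threshold_target_boundsb (N.of_nat k) (N.of_nat h) (N.of_nat d))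
                    (iota 0 h))
      (iota 0 (4 * k).+1).

Lemma threshold_target_bounds_for_small : all threshold_target_bounds_for (iota 2 38).
Proof. by vm_compute. Qed.

Lemma threshold_target_bounds_small k h d : 2 <= k -> k < 40 -> h <= 4 * k ->
  2 * threshold k h <= h * h.-1 ->
  let D := threshold k h - threshold k h.-1 in
  D < d -> d < h -> h * d <= (2 * threshold k h).+1 -> target_bounds k D d.
Proof.
move=> k2 k40 h4 hA D dD dh dh2.
have /allP /(_ k) := threshold_target_bounds_for_small; rewrite mem_iota => /(_ ltac:(lia)).
move=> /allP /(_ h); rewrite mem_iota => /(_ ltac:(lia)).
move=> /allP /(_ d); rewrite mem_iota => /(_ ltac:(lia)).
rewrite /threshold_target_boundsb (_ : (N.of_nat h - 1)%N = N.of_nat h.-1); last lia.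
rewrite -!thresholdN_of_nat.
rewrite (introT (N.leb_spec0 _ _)); last lia.
rewrite (introT (N.leb_spec0 _ _)); last by rewrite /D in dD; lia.
rewrite (introT (N.leb_spec0 _ _)); last lia.
rewrite !implyTb target_boundsE => /and3P [/N.leb_le c1 /N.leb_le c2 /N.leb_le c3].
by rewrite /D; apply/and3P; split; lia.
Qed.

Lemma threshold_target_bounds k h d : 2 <= k -> h <= 4 * k ->
  2 * threshold k h <= h * h.-1 ->
  let D := threshold k h - threshold k h.-1 in
  D < d -> d < h -> h * d <= (2 * threshold k h).+1 -> target_bounds k D d.
Proof.
move=> k2 h4 hA D dD dh dh2.
have [k40 | k40] := ltnP k 40; first exact: threshold_target_bounds_small.
apply: threshold_target_bounds_large => //; rewrite ltnNge; apply/negP => hk.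
by have := @threshold_gt_complete k h ltac:(lia) hk; lia.
Qed.

Lemma card_pairs (S : finType) (A : {set S * S}) :
  #|A| = \sum_(u : S) #|[set c | (u, c) \in A]|.
Proof.
transitivity (\sum_(p : S * S) ((p.1, p.2) \in A : nat)).
  rewrite -sum1_card big_mkcond; apply: eq_bigr => -[x y] _ /=.
  by case: (_ \in A).
rewrite -(pair_bigA _ (fun u c => ((u, c) \in A) : nat)) /=.
apply: eq_bigr => u _; rewrite -sum1_card [RHS]big_mkcond; apply: eq_bigr => c _.
by rewrite inE; case: (_ \in A).
Qed.

Lemma connected_inU (T : finType) (e : rel T) (A B : {set T}) x y :
  symmetric e -> connected_in e A -> connected_in e B ->
  x \in A -> y \in B -> e x y -> connected_in e (A :|: B).
Proof.
move=> se cA cB xA yB exy.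
pose eU := [rel p q | [&& e p q, p \in A :|: B & q \in A :|: B]].
have sub (C : {set T}) : C \subset A :|: B -> forall u v,
    connect [rel p q | [&& e p q, p \in C & q \in C]] u v -> connect eU u v.
  move=> sC u v; apply: connect_sub => p q /= /and3P [epq pC qC].
  by apply: connect1; rewrite /= epq (subsetP sC _ pC) (subsetP sC _ qC).
have cA' := sub _ (subsetUl A B); have cB' := sub _ (subsetUr A B).
have xy : connect eU x y by apply: connect1; rewrite /= exy !inE xA yB orbT.
have yx : connect eU y x by apply: connect1; rewrite /= se exy !inE xA yB orbT.
move=> u v; rewrite !inE => /orP [uA | uB] /orP [vA | vB].
- exact: cA' (cA _ _ uA vA).
- exact: connect_trans (cA' _ _ (cA _ _ uA xA)) (connect_trans xy (cB' _ _ (cB _ _ yB vB))).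
- exact: connect_trans (cB' _ _ (cB _ _ uB yB)) (connect_trans yx (cA' _ _ (cA _ _ xA vA))).
- exact: cB' (cB _ _ uB vB).
Qed.

Lemma mindeg_le_deg (U : finType) (f : rel U) u : mindeg f <= deg f u.
Proof. by rewrite /mindeg -minEnat; exact: (@Order.TotalTheory.bigmin_le _ nat). Qed.

Lemma mindeg_ge (U : finType) (f : rel U) m :
  m <= #|U| -> (forall u, m <= deg f u) -> m <= mindeg f.
Proof. by move=> mU mf; rewrite /mindeg -minEnat; apply: (@Order.POrderTheory.le_bigmin _ nat). Qed.

Lemma ex_minimal (A : Type) (m : A -> nat) (Q : A -> Prop) x :
  Q x -> exists y, Q y /\ forall z, m z < m y -> ~ Q z.
Proof.
move: {2}(m x) (leqnn (m x)) => n; elim: n x => [|n IH] x le Qx.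
  by exists x; split => // z; lia.
have [[z [lt Qz]] | none] := classic (exists z, m z < m x /\ Q z).
  by apply: IH Qz; lia.
by exists x; split => // z lt Qz; apply: none; exists z.
Qed.

Section MinorModels.
Variables (T : finType) (e : rel T).

(* Each edge of the minor appears in E in both orientations. *)
Definition minor_model (P : {set {set T}}) (E : {set {set T} * {set T}}) : Prop :=
  [/\ forall B, B \in P -> B != set0,
      forall B, B \in P -> connected_in e B,
      forall B C, B \in P -> C \in P -> B != C -> [disjoint B & C],
      forall B C, (B, C) \in E -> [/\ B \in P, C \in P, B != C & (C, B) \in E]
    & forall B C, (B, C) \in E -> exists x y, [/\ x \in B, y \in C & e x y]].

Definition nbr (E : {set {set T} * {set T}}) (B : {set T}) := [set C | (B, C) \in E].
Definition mdeg (E : {set {set T} * {set T}}) (B : {set T}) := #|nbr E B|.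
Definition codeg (E : {set {set T} * {set T}}) (B C : {set T}) := #|nbr E B :&: nbr E C|.

Lemma model_of_graph : simple_graph e ->
  exists P E, [/\ minor_model P E, #|P| = #|T| & #|E| = degsum e].
Proof.
move=> [ie se]; pose g (p : T * T) := ([set p.1], [set p.2]).
exists [set [set x] | x : T], (g @: [set p | e p.1 p.2]); split.
- split.
  + by move=> B /imsetP [x _ ->]; apply/set0Pn; exists x; exact: set11.
  + by move=> B /imsetP [x _ ->] u v; rewrite !inE => /eqP -> /eqP ->; exact: connect0.
  + move=> B C /imsetP [x _ ->] /imsetP [y _ ->] nxy.
    by rewrite disjoints1 inE; apply: contra nxy => /eqP ->.
  + move=> B C /imsetP [[x y]]; rewrite inE /= => exy [-> ->].
    split; try exact: imset_f.
      by apply/negP => /eqP /set1_inj exy'; rewrite exy' ie in exy.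
    by apply/imsetP; exists (y, x) => //; rewrite inE /= se.
  + move=> B C /imsetP [[x y]]; rewrite inE /= => exy [-> ->].
    by exists x, y; rewrite !inE !eqxx.
- by rewrite card_imset //; exact: set1_inj.
rewrite card_imset; last by move=> [x y] [x' y'] [/set1_inj -> /set1_inj ->].
by rewrite card_pairs /degsum; apply: eq_bigr => u _; apply: eq_card => w; rewrite !inE.
Qed.

Variables (P : {set {set T}}) (E : {set {set T} * {set T}}).
Hypothesis PE : minor_model P E.

Lemma card_model_edges : #|E| = \sum_(B in P) mdeg E B.
Proof.
have [_ _ _ hE _] := PE.
rewrite card_pairs (bigID (fun B => B \in P)) /= [X in _ + X]big1 ?addn0 // => B hB.
apply/eqP; rewrite cards_eq0; apply/eqP/setP => C.
by rewrite !inE; apply/negP => /hE [hb _ _ _]; rewrite hb in hB.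
Qed.

Lemma mdeg_lt_card B : B \in P -> mdeg E B < #|P|.
Proof.
have [_ _ _ hE _] := PE; move=> hB; apply: proper_card; rewrite properE; apply/andP; split.
  by apply/subsetP => C; rewrite inE => /hE [].
by apply/subsetP => /(_ B hB); rewrite inE => /hE [_ _ /eqP].
Qed.

Lemma card_model_edges_le : #|E| <= #|P| * #|P|.-1.
Proof.
rewrite card_model_edges -sum_nat_const; apply: leq_sum => B hB.
by have := mdeg_lt_card hB; lia.
Qed.

Lemma card_model_edges_ge m : (forall B, B \in P -> m <= mdeg E B) -> #|P| * m <= #|E|.
Proof. by move=> hm; rewrite card_model_edges -sum_nat_const; apply: leq_sum. Qed.

Lemma graph_of_model m : 0 < #|P| -> (forall B, B \in P -> m <= mdeg E B) ->
  exists f : rel 'I_#|P|, [/\ simple_graph f, minor f e, m <= mindeg f & mindeg f < #|P|].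
Proof.
have [h1 h2 h3 h4 h5] := PE; move=> hP hm.
pose phi (i : 'I_#|P|) : {set T} := enum_val i.
have phiP i : phi i \in P by exact: enum_valP.
have phi_inj : injective phi by exact: enum_val_inj.
pose f := fun i j : 'I_#|P| => (phi i, phi j) \in E.
have degf i : deg f i = mdeg E (phi i).
  rewrite /deg /mdeg (_ : nbr E (phi i) = phi @: [set j | f i j]) ?card_imset //.
  apply/setP => C; rewrite inE; apply/idP/imsetP => [hC | [j]]; last by rewrite inE => hj ->.
  have [_ CP _ _] := h4 _ _ hC.
  exists (enum_rank_in (phiP i) C); last by rewrite /phi enum_rankK_in.
  by rewrite inE /f /phi enum_rankK_in.
have i0 : 'I_#|P| := Ordinal hP.
exists f; split.
- split; first by move=> i; apply/negP => /h4 [_ _ /eqP].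
  by move=> i j; apply/idP/idP => /h4 [].
- exists phi; split=> [u | u | u v nuv | u v /h5 //]; [exact: h1 | exact: h2 |].
  by apply: h3 => //; apply: contra nuv => /eqP /phi_inj ->.
- apply: mindeg_ge => [|i]; last by rewrite degf hm.
  by rewrite card_ord; have := hm _ (phiP i0); have := mdeg_lt_card (phiP i0); lia.
- by apply: leq_ltn_trans (mindeg_le_deg f i0) _; rewrite degf mdeg_lt_card.
Qed.

Lemma model_restrict_nbr v : v \in P -> exists E',
  minor_model (nbr E v) E' /\ forall u, u \in nbr E v -> mdeg E' u = codeg E u v.
Proof.
have [h1 h2 h3 h4 h5] := PE; move=> hv.
have sP B : B \in nbr E v -> B \in P by rewrite inE => /h4 [].
exists [set p in E | (p.1 \in nbr E v) && (p.2 \in nbr E v)]; split.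
- split.
  + by move=> B /sP /h1.
  + by move=> B /sP /h2.
  + by move=> B C /sP hB /sP hC; exact: h3.
  + move=> B C; rewrite inE /= => /and3P [hBC hB hC].
    by have [? ? ? ?] := h4 _ _ hBC; split => //; rewrite inE /=; apply/and3P; split.
  + by move=> B C; rewrite inE /= => /and3P [hBC _ _]; exact: h5.
move=> u hu; rewrite /mdeg /nbr; apply: eq_card => C; rewrite !inE /=.
by move: hu; rewrite inE => ->; case: ((u, C) \in E).
Qed.

Lemma model_delete_edge a b : (a, b) \in E ->
  exists E', [/\ minor_model P E', #|E'| < #|E| & #|E| <= #|E'| + 2].
Proof.
have [h1 h2 h3 h4 h5] := PE; move=> hab; exists (E :\ (a, b) :\ (b, a)); split.
- split => // [B C | B C]; rewrite !inE; last by move=> /and3P [_ _]; exact: h5.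
  move=> /and3P [n1 n2 hBC]; have [? ? ? ?] := h4 _ _ hBC.
  split => //; apply/and3P; split => //.
    by apply: contra n2 => /eqP [-> ->].
  by apply: contra n1 => /eqP [-> ->].
- rewrite (cardsD1 (a, b) E) hab add1n ltnS (cardsD1 (b, a) (E :\ (a, b))).
  exact: leq_addl.
- rewrite (cardsD1 (a, b) E) (cardsD1 (b, a) (E :\ (a, b))) hab.
  by rewrite addnA addnC leq_add2l -[2]/(1 + 1) leq_add ?leq_b1.
Qed.

Lemma model_delete_branch B0 : B0 \in P ->
  exists P' E', [/\ minor_model P' E', #|P'| = #|P|.-1, #|E'| <= #|E|
                 & #|E| <= #|E'| + 2 * mdeg E B0].
Proof.
have [h1 h2 h3 h4 h5] := PE; move=> hB0.
set E' := [set p in E | (p.1 != B0) && (p.2 != B0)].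
exists (P :\ B0), E'; split.
- split.
  + by move=> B; rewrite inE => /andP [_ /h1].
  + by move=> B; rewrite inE => /andP [_ /h2].
  + by move=> B C; rewrite !inE => /andP [_ hB] /andP [_ hC]; exact: h3.
  + move=> B C; rewrite !inE /= => /andP [hBC /andP [n1 n2]].
    by have [? ? ? ?] := h4 _ _ hBC; rewrite n1 n2 /= andbT; split.
  + by move=> B C; rewrite !inE /= => /andP [hBC _]; exact: h5.
- by rewrite (cardsD1 B0 P) hB0.
- by apply: subset_leq_card; apply/subsetP => p; rewrite inE => /andP [].
set O := [set (B0, C) | C in nbr E B0]; set I := [set (C, B0) | C in nbr E B0].
have hsub : E \subset E' :|: (O :|: I).
  apply/subsetP => -[x y] hxy; rewrite !in_setU.
  have [xB0 | nx] := eqVneq x B0.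
    by rewrite (_ : (x, y) \in O) ?orbT // xB0; apply: imset_f; rewrite inE -xB0.
  have [yB0 | ny] := eqVneq y B0.
    rewrite (_ : (x, y) \in I) ?orbT // yB0; apply: imset_f; rewrite inE.
    by have [] := h4 _ _ hxy; rewrite yB0.
  by rewrite inE /= hxy nx ny.
apply: leq_trans (subset_leq_card hsub) _; apply: leq_trans (leq_card_setU _ _) _.
rewrite leq_add2l mul2n -addnn; apply: leq_trans (leq_card_setU _ _) _.
by apply: leq_add; apply: leq_imset_card.
Qed.

Section Contraction.

Hypothesis se : symmetric e.
Variables a b : {set T}.
Hypothesis hab : (a, b) \in E.

Definition merge_branch (z : {set T}) := if z \in [set a; b] then a :|: b else z.

Lemma merge_branch_new z : z \in P -> z \notin [set a; b] -> z != a :|: b.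
Proof.
have [h1 _ h3 h4 _] := PE; have [ha _ _ _] := h4 _ _ hab.
rewrite !inE negb_or => zP /andP [za zb]; apply/eqP => zM.
have := h3 _ _ zP ha za; rewrite -setI_eq0 (setIidPr (_ : a \subset z)) ?zM ?subsetUl //.
by move/eqP=> a0; have := h1 _ ha; rewrite a0 eqxx.
Qed.

Lemma merge_branch_eq z z' : z \in P -> z' \in P -> merge_branch z = merge_branch z' ->
  z = z' \/ z \in [set a; b] /\ z' \in [set a; b].
Proof.
rewrite /merge_branch => zP z'P; case: ifPn => iz; case: ifPn => iz' ezz'; [by right | | | by left].
- by have := merge_branch_new z'P iz'; rewrite -ezz' eqxx.
- by have := merge_branch_new zP iz; rewrite ezz' eqxx.
Qed.

Definition contract_branches := (a :|: b) |: (P :\ a :\ b).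
Definition contract_edges :=
  [set (merge_branch p.1, merge_branch p.2) | p in E & merge_branch p.1 != merge_branch p.2].

Lemma contract_model : minor_model contract_branches contract_edges.
Proof.
have [h1 h2 h3 h4 h5] := PE; have [ha hb nab _] := h4 _ _ hab.
have mergeP z : z \in P -> merge_branch z \in contract_branches.
  rewrite /merge_branch => zP; case: ifPn => [_ | ]; first by rewrite setU11.
  by rewrite !inE negb_or zP => /andP [-> ->]; rewrite orbT.
have sub_merge (z : {set T}) : z \subset merge_branch z.
  by rewrite /merge_branch; case: ifPn => // /set2P [] ->; [exact: subsetUl | exact: subsetUr].
have disjM (C : {set T}) : C \in P -> C != a -> C != b -> [disjoint a :|: b & C].
  move=> CP; rewrite ![C == _]eq_sym => aC bC.
  move: (h3 _ _ ha CP aC) (h3 _ _ hb CP bC); rewrite -!setI_eq0 setIUl => /eqP -> /eqP ->.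
  by rewrite setU0.
split.
- move=> B; rewrite !inE => /orP [/eqP -> | /and3P [_ _ /h1] //].
  by have /set0Pn [x xa] := h1 _ ha; apply/set0Pn; exists x; rewrite inE xa.
- move=> B; rewrite !inE => /orP [/eqP -> | /and3P [_ _ /h2] //].
  have [x [y [xa yb exy]]] := h5 _ _ hab.
  exact: connected_inU se (h2 _ ha) (h2 _ hb) xa yb exy.
- move=> B C; rewrite !inE.
  move=> /orP [/eqP -> | /and3P [Bb Ba BP]] /orP [/eqP -> | /and3P [Cb Ca CP]].
  + by rewrite eqxx.
  + by move=> _; apply: disjM.
  + by move=> _; rewrite disjoint_sym; apply: disjM.
  + exact: h3.
- move=> B C /imsetP [[x y]]; rewrite inE /= => /andP [hxy nxy] [-> ->].
  have [xP yP _ yx] := h4 _ _ hxy; split; [exact: mergeP | exact: mergeP | exact: nxy | ].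
  by apply/imsetP; exists (y, x) => //; rewrite inE /= yx eq_sym nxy.
- move=> B C /imsetP [[x y]]; rewrite inE /= => /andP [hxy _] [-> ->].
  have [x0 [y0 [hx hy exy]]] := h5 _ _ hxy.
  by exists x0, y0; split => //; apply: (subsetP (sub_merge _)).
Qed.

Lemma card_contract_branches : #|contract_branches| = #|P|.-1.
Proof.
have [_ _ _ h4 _] := PE; have [ha hb nab _] := h4 _ _ hab.
have MP : a :|: b \notin P :\ a :\ b.
  rewrite !inE; apply/negP => /and3P [Mb Ma MP].
  by have := merge_branch_new MP; rewrite !inE (negbTE Ma) (negbTE Mb) eqxx => /(_ isT).
rewrite cardsU1 MP (cardsD1 a P) ha (cardsD1 b (P :\ a)) !inE hb eq_sym nab.
by rewrite add1n.
Qed.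

Lemma card_contract_edges_le : #|contract_edges| <= #|E|.
Proof.
apply: leq_trans (leq_imset_card _ _) _; apply: subset_leq_card.
by apply/subsetP => p; rewrite inE => /andP [].
Qed.

(* The edges lost by contracting [ab]: both orientations of [ab], and for each
   common neighbour [c] one of the two parallel edges [ac], [bc]. *)
Definition contract_lost :=
  [set (a, b); (b, a)] :|: [set (b, c) | c in nbr E a :&: nbr E b]
                       :|: [set (c, b) | c in nbr E a :&: nbr E b].

Lemma card_contract_lost : #|contract_lost| <= 2 + 2 * codeg E a b.
Proof.
rewrite mul2n -addnn addnA; apply: leq_trans (leq_card_setU _ _) _.
apply: leq_add; last exact: leq_imset_card.
apply: leq_trans (leq_card_setU _ _) _; rewrite cards2.
by apply: leq_add; [case: (_ != _) | exact: leq_imset_card].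
Qed.

Lemma contract_kept_sym x y : (x, y) \in E :\: contract_lost -> (y, x) \in E :\: contract_lost.
Proof.
have [_ _ _ h4 _] := PE; rewrite !inE => /andP [nl hxy]; have [_ _ _ ->] := h4 _ _ hxy.
rewrite andbT; apply: contra nl; rewrite -!orbA => /or4P [].
- by move=> /eqP [-> ->]; rewrite eqxx orbT.
- by move=> /eqP [-> ->]; rewrite eqxx.
- by move=> /imsetP [c cN [-> ->]]; rewrite (imset_f (fun c => (c, b))) ?orbT.
- by move=> /imsetP [c cN [-> ->]]; rewrite (imset_f (fun c => (b, c))) ?orbT.
Qed.

Lemma contract_kept_not_merged x y : (x, y) \in E :\: contract_lost ->
  ~~ ((x \in [set a; b]) && (y \in [set a; b])).
Proof.
have [_ _ _ h4 _] := PE; rewrite !inE => /andP [nl hxy]; have [_ _ nxy _] := h4 _ _ hxy.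
apply: contra nl => /andP [/orP [] /eqP ex /orP [] /eqP ey]; move: nxy.
all: by rewrite ex ey ?eqxx ?orbT.
Qed.

Lemma merge_kept_inj :
  {in E :\: contract_lost &, injective (fun p => (merge_branch p.1, merge_branch p.2))}.
Proof.
have [_ _ _ h4 _] := PE.
have first x y x' y' : (x, y) \in E :\: contract_lost -> (x', y') \in E :\: contract_lost ->
    merge_branch x = merge_branch x' -> merge_branch y = merge_branch y' -> x = x'.
  move=> kp kq ex ey; have [hxy nl] := setDP kp; have [hxy' nl'] := setDP kq.
  have [xP yP _ yx] := h4 _ _ hxy; have [xP' yP' _ _] := h4 _ _ hxy'.
  have [// | nxx'] := eqVneq x x'.
  have [exx' | [ix ix']] := merge_branch_eq xP xP' ex; first by rewrite exx' eqxx in nxx'.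
  have iy : y \notin [set a; b] by have := contract_kept_not_merged kp; rewrite ix.
  have iy' : y' \notin [set a; b] by have := contract_kept_not_merged kq; rewrite ix'.
  move: ey; rewrite /merge_branch (negbTE iy) (negbTE iy') => ey; subst y'.
  have lost : y \in nbr E a :&: nbr E b -> (b, y) \in contract_lost.
    by move=> yN; rewrite !inE (imset_f (fun c => (b, c))) ?orbT.
  move: ix ix' nxx' hxy hxy' nl nl' => /set2P [] -> /set2P [] -> //= _ hx hx' nl nl'.
    by case/negP: nl'; apply: lost; rewrite !inE hx hx'.
  by case/negP: nl; apply: lost; rewrite !inE hx hx'.
move=> [x y] [x' y'] kp kq [ex ey] /=.
have -> := first _ _ _ _ kp kq ex ey.
by have -> := first _ _ _ _ (contract_kept_sym kp) (contract_kept_sym kq) ey ex.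
Qed.

Lemma card_contract_edges_ge : #|E| <= #|contract_edges| + 2 + 2 * codeg E a b.
Proof.
have [_ _ _ h4 _] := PE.
have kept : #|E :\: contract_lost| <= #|contract_edges|.
  rewrite -(card_in_imset merge_kept_inj); apply/subset_leq_card/subsetP => _ /imsetP [[x y] kp ->].
  have [hxy _] := setDP kp; have [xP yP nxy _] := h4 _ _ hxy.
  apply: imset_f; rewrite inE /= hxy /=; apply/negP => /eqP exy.
  have [exy' | [ix iy]] := merge_branch_eq xP yP exy; first by rewrite exy' eqxx in nxy.
  by have := contract_kept_not_merged kp; rewrite ix iy.
have lost : #|E :&: contract_lost| <= #|contract_lost| by rewrite subset_leq_card ?subsetIr.
rewrite -(cardsID contract_lost E) addnC -addnA.
exact: leq_add kept (leq_trans lost card_contract_lost).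
Qed.

End Contraction.

Lemma model_contract_edge a b : symmetric e -> (a, b) \in E ->
  exists P' E', [/\ minor_model P' E', #|P'| = #|P|.-1, #|E'| <= #|E|
                 & #|E| <= #|E'| + 2 + 2 * codeg E a b].
Proof.
move=> se hab; exists (contract_branches a b), (contract_edges a b).
by split; [apply: contract_model | apply: card_contract_branches
           | apply: card_contract_edges_le | apply: card_contract_edges_ge].
Qed.

End MinorModels.

Section DenseModels.
Variables (T : finType) (e : rel T) (f : nat -> nat) (hmax : nat).
Hypotheses (se : symmetric e) (f_homo : {homo f : m n / m <= n}) (f1_gt0 : 0 < f 1).

Definition dense_model (P : {set {set T}}) (E : {set {set T} * {set T}}) :=
  [/\ minor_model e P E, 0 < #|P| <= hmax & 2 * f #|P| <= #|E|].

Lemma minimal_dense_model P E : dense_model P E ->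
  exists P E, [/\ dense_model P E, #|E| <= (2 * f #|P|).+1,
    forall B, B \in P -> f #|P| - f #|P|.-1 < mdeg E B
  & forall a b : {set T}, (a, b) \in E -> f #|P| - f #|P|.-1 <= codeg E a b].
Proof.
move=> dPE; have [[P1 E1] [/= dPE1 min]] :=
  @ex_minimal ({set {set T}} * {set {set T} * {set T}}) (fun x => #|x.1| + #|x.2|)
    (fun x => dense_model x.1 x.2) (P, E) dPE.
have [PE1 /andP [h0 hh] hE] := dPE1; set h := #|P1| in h0 hh hE *.
have notdense P2 E2 : minor_model e P2 E2 -> #|P2| + #|E2| < h + #|E1| ->
    0 < #|P2| <= hmax -> #|E2| < 2 * f #|P2|.
  by move=> PE2 lt hP2; rewrite ltnNge; apply/negP => hE2; apply: (min (P2, E2)).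
have h1 : 1 < h.
  rewrite ltnNge; apply/negP => h1; have := card_model_edges_le PE1.
  have := f_homo h0; rewrite -/h (_ : h.-1 = 0) ?muln0; lia.
have fh := f_homo (leq_pred h).
exists P1, E1; split => //.
- rewrite -/h leqNgt; apply/negP => big.
  have /card_gt0P [[a b] hab] : 0 < #|E1| := leq_ltn_trans (leq0n _) big.
  have [E2 [PE2 lt le]] := model_delete_edge PE1 hab.
  have : #|E2| < 2 * f h by apply: (notdense _ _ PE2); rewrite -/h ?h0 ?hh //; lia.
  by rewrite ltnNge -(leq_add2r 2) addn2 (leq_trans big le).
- move=> B hB; rewrite -/h ltnNge; apply/negP => small.
  have [P2 [E2 [PE2 hP2 le1 le2]]] := model_delete_branch PE1 hB.
  have : #|E2| < 2 * f h.-1 by rewrite -hP2; apply: (notdense _ _ PE2); rewrite hP2 -/h; lia.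
  lia.
move=> a b hab; rewrite -/h leqNgt; apply/negP => small.
have [P2 [E2 [PE2 hP2 le1 le2]]] := model_contract_edge PE1 se hab.
have : #|E2| < 2 * f h.-1 by rewrite -hP2; apply: (notdense _ _ PE2); rewrite hP2 -/h; lia.
lia.
Qed.

Lemma dense_model_nbr_model P E : dense_model P E ->
  exists h P' E', [/\ minor_model e P' E', forall B, B \in P' -> f h - f h.-1 <= mdeg E' B
  & [/\ h <= hmax, f h - f h.-1 < #|P'| < h, h * #|P'| <= (2 * f h).+1 & 2 * f h <= h * h.-1]].
Proof.
move=> /minimal_dense_model [P1 [E1 [[PE1 hP1 hE1] le hdeg hcodeg]]].
have /card_gt0P [v vP] : 0 < #|P1| by case/andP: hP1.
have [w wP wmin] := arg_minnP (mdeg E1) vP.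
have [E2 [PE2 deg2]] := model_restrict_nbr PE1 wP.
exists #|P1|, (nbr E1 w), E2; split; first exact: PE2.
  move=> B BP2; rewrite deg2 // /codeg setIC; apply: hcodeg.
  by move: BP2; rewrite inE.
split.
- by case/andP: hP1.
- by rewrite hdeg // (mdeg_lt_card PE1 wP).
- exact: leq_trans (card_model_edges_ge PE1 wmin) le.
- exact: leq_trans hE1 (card_model_edges_le PE1).
Qed.

End DenseModels.

Lemma small_dense_model k (T : finType) (e : rel T) :
  0 < k -> simple_graph e -> 4 * k * #|T| <= degsum e -> 0 < #|T| ->
  exists P E, [/\ minor_model e P E, 2 * k < #|P| <= 4 * k
                 & forall B, B \in P -> 2 * k <= mdeg E B].
Proof.
move=> k0 sg hdeg T0; have [_ se] := sg.
have [P [E [PE cP cE]]] := model_of_graph sg.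
have lin_homo : {homo (fun h => 2 * k * h) : m n / m <= n}.
  by move=> m n; rewrite leq_mul2l orbC => ->.
have dPE : dense_model e (fun h => 2 * k * h) #|T| P E.
  by split; rewrite // cP ?T0 ?cE //; lia.
have [h [P' [E' [PE' deg [_ /andP [lo hi] dh _]]]]] :=
  dense_model_nbr_model se lin_homo (ltac:(lia) : 0 < 2 * k * 1) dPE.
have step : 2 * k * h - 2 * k * h.-1 = 2 * k.
  by rewrite -mulnBr (_ : h - h.-1 = 1) ?muln1 //; lia.
rewrite step in lo deg; exists P', E'; split => //; rewrite lo /=.
rewrite leqNgt; apply/negP => big.
have : h * (4 * k).+1 <= h * #|P'| by rewrite leq_mul2l big orbT.
rewrite mulnS; move: dh; rewrite mulnCA; lia.
Qed.

Lemma target_minor k (T : finType) (e : rel T) P E :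
  2 <= k -> symmetric e -> minor_model e P E -> 2 * k < #|P| <= 4 * k ->
  (forall B, B \in P -> 2 * k <= mdeg E B) ->
  exists n (f : rel 'I_n), [/\ simple_graph f, minor f e, target_bounds k (mindeg f) n,
                              mindeg f < n & n <= 4 * k].
Proof.
move=> k2 se PE /andP [lo hi] deg.
have dPE : dense_model e (threshold k) (4 * k) P E.
  split => //; first by rewrite hi (leq_ltn_trans _ lo).
  apply: leq_trans (card_model_edges_ge PE deg).
  by rewrite [_ * (2 * k)]mulnC -mulnA leq_mul2l threshold_le_mul ?orbT.
have [h [P' [E' [PE' deg' [h4 /andP [lo' hi'] dh hU]]]]] :=
  dense_model_nbr_model se (threshold_homo k) (threshold_gt0 k 1) dPE.
have bounds := threshold_target_bounds k2 h4 hU lo' hi' dh.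
have P'0 : 0 < #|P'| by apply: leq_ltn_trans lo'.
have [f [sf mf fdeg fn]] := graph_of_model PE' P'0 deg'.
exists #|P'|, f; split => //; last by rewrite ltnW // (leq_trans hi').
move: bounds; rewrite !target_boundsE => /and3P [b1 b2 b3].
by apply/and3P; split; lia.
Qed.

Lemma minor_complete1 (T : finType) (e : rel T) : 0 < #|T| -> minor (@complete_rel 1) e.
Proof.
move=> /card_gt0P [x0 _]; exists (fun _ => [set x0]); split.
- by move=> u; apply/set0Pn; exists x0; rewrite inE.
- by move=> u a b; rewrite !inE => /eqP -> /eqP ->; exact: connect0.
- by move=> u v; rewrite (ord1 u) (ord1 v) eqxx.
- by move=> u v; rewrite /complete_rel (ord1 u) (ord1 v) eqxx.
Qed.

Unset Implicit Arguments.

Theorem lemma7 (k : nat) (T : finType) (e : rel T) :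
  1 <= k ->
  simple_graph e ->
  0 < #|T| ->
  4 * k * #|T| <= degsum e ->
  minor (@complete_rel k) e \/
  exists (n : nat) (f : rel 'I_n),
    [/\ simple_graph f, minor f e,
        10000 * mindeg f >= 6518 * n,
        10000 * (2 * mindeg f) >= 10000 * n + 4659 * k
      & [/\ k <= mindeg f, mindeg f < n & n <= 4 * k]].
Proof.
move=> k1 sg T0 hdeg.
have [-> | k2] := eqVneq k 1; first by left; exact: minor_complete1.
right; have [P [E [PE hP deg]]] := small_dense_model k1 sg hdeg T0.
have [n [f [sf mf /and3P [b1 b2 b3] fn n4]]] := target_minor (ltac:(lia) : 2 <= k) sg.2 PE hP deg.
by exists n, f.
Qed.
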